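(* Let $G$ be a finite graph with edges labeled $1,\dots,n$, let $\sigma$ be a permutation of $\{1,\dots,n\}$, and let $G_\sigma$ be the same graph with the edge labeled $k$ in $G$ relabeled $\sigma(k)$. Then the chain complexes $\mathcal{C}(G)$ and $\mathcal{C}(G_\sigma)$ are isomorphic (by degree-preserving isomorphisms commuting with the differentials); consequently the cohomology groups $H^i(G)$ are independent of the ordering of the edges and are invariants of the graph.
   Context: Graphs are finite; loops and multiple edges allowed. For $G=(V,E)$ and $s\subseteq E$, $[G:s]$ is the spanning subgraph with edge set $s$. With $1*1=1$, $1*x=x*1=x$, $x*x=0$: an enhanced state is $S=(s,c)$, $s\subseteq E$, $c$ assigning $1$ or $x$ to each component of $[G:s]$; $i(S)=|s|$, $j(S)=$ number of components colored $x$. $C^{i,j}(G)$ is free abelian on enhanced states with $i(S)=i,j(S)=j$; $C^i(G)=\bigoplus_jC^{i,j}(G)$, graded by $j$. For an ordering of the edges, $d(S)=\sum_{e\in E\setminus s}(-1)^{n(e)}S_e$, $n(e)$ the number of edges of $s$ ordered before $e$; $S_e=(s\cup\{e\},c_e)$ where, if $e$ joins a component to itself, colors are unchanged, and if $e$ joins distinct components $E_1,E_2$ the merged component gets $c(E_1)*c(E_2)$ (and $S_e=0$ if this product is $0$). $\mathcal{C}(G)=(C^\bullet(G),d)$, and $H^i(G)$ is its $i$-th cohomology, graded by $j$. *)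

From HB Require Import structures.
From mathcomp Require Import all_boot all_order all_algebra all_fingroup.
Set Implicit Arguments. Unset Strict Implicit. Unset Printing Implicit Defensive.
Import GRing.Theory.
Local Open Scope ring_scope.

(* A finite graph (loops and multiple edges allowed) with vertex type V and
   edges labelled by 'I_n; the edge with label k has endpoints [ends k].
   The ordering of the edges is the ordering of the labels. *)
Section ChromaticComplex.
Variables (V : finType) (n : nat) (ends : 'I_n -> V * V).

Definition sadj (s : {set 'I_n}) : rel V :=
  fun u v => [exists e in s, (ends e == (u, v)) || (ends e == (v, u))].

Definition sconn (s : {set 'I_n}) (u v : V) : bool := connect (sadj s) u v.

(* a colouring c : V -> bool (true = x, false = 1) constant on the
   components of [G:s] is the same thing as a colouring of the components *)
Definition valid_state (p : {set 'I_n} * {ffun V -> bool}) : bool :=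
  [forall u, forall v, sconn p.1 u v ==> (p.2 u == p.2 v)].

Definition State := {p : {set 'I_n} * {ffun V -> bool} | valid_state p}.

Definition st_s (S : State) : {set 'I_n} := (val S).1.
Definition st_c (S : State) : {ffun V -> bool} := (val S).2.

Definition ideg (S : State) : nat := #|st_s S|.
Definition jdeg (S : State) : nat :=
  #|[set [set v | sconn (st_s S) u v] | u in [set u | st_c S u]]|.

Definition nbefore (s : {set 'I_n}) (e : 'I_n) : nat :=
  #|[set e' in s | (e' < e)%N]|.

(* colouring of S_e when it is nonzero: the component containing e gets
   c(E1)*c(E2) (= c(E1) if e joins a component to itself) *)
Definition newcol (s : {set 'I_n}) (c : {ffun V -> bool}) (e : 'I_n)
  : {ffun V -> bool} :=
  [ffun v => if sconn (s :|: [set e]) (ends e).1 v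
             then c (ends e).1 || c (ends e).2 else c v].

Definition Se_zero (s : {set 'I_n}) (c : {ffun V -> bool}) (e : 'I_n) : bool :=
  [&& ~~ sconn s (ends e).1 (ends e).2, c (ends e).1 & c (ends e).2].

Definition dcoef (S T : State) : int :=
  \sum_(e : 'I_n | [&& e \notin st_s S,
                      st_s T == st_s S :|: [set e],
                      st_c T == newcol (st_s S) (st_c S) e
                    & ~~ Se_zero (st_s S) (st_c S) e])
     (-1) ^+ nbefore (st_s S) e.

(* the cochain group C(G) = free abelian group on the (finitely many)
   enhanced states; an element is its coefficient function *)
Definition Cochain := {ffun State -> int}.

Definition dmap (x : Cochain) : Cochain :=
  [ffun T => \sum_(S : State) x S * dcoef S T].

Definition inCij (i j : nat) (x : Cochain) : Prop :=
  forall S : State, x S != 0 -> ideg S = i /\ jdeg S = j.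

End ChromaticComplex.

(* G_sigma: the edge labelled k in G gets label sigma k *)
Definition relabel (V : finType) (n : nat) (ends : 'I_n -> V * V)
  (sigma : {perm 'I_n}) : 'I_n -> V * V :=
  fun k => ends ((sigma^-1)%g k).

Definition complex_iso (V : finType) (n : nat) (e1 e2 : 'I_n -> V * V) : Prop :=
  exists f : Cochain e1 -> Cochain e2,
    [/\ forall x y, f (x + y) = f x + f y,
        bijective f,
        forall i j x, inCij i j x -> inCij i j (f x)
      & forall x, f (dmap x) = dmap (f x)].

(* Relabelling the edges by sigma maps an enhanced state (s, c) of G to the
   state (sigma s, c) of G_sigma, preserving both gradings and the terms S_e
   of the differential; only the signs (-1)^n(e) change.  Twist the induced
   map on cochains by (-1)^inv(s), where inv(s) counts the pairs of edges of s
   whose order sigma reverses.  Adding e to s changes inv by the number of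
   a in s for which "a before e" and "sigma a before sigma e" disagree, and
   n(e) and the n(sigma e) of G_sigma differ by the same number mod 2. *)
From mathcomp Require Import all_boot all_order all_algebra all_fingroup.
Set Implicit Arguments. Unset Strict Implicit. Unset Printing Implicit Defensive.
Import GRing.Theory.
Local Open Scope ring_scope.

Lemma sign_card (R : pzRingType) (T : finType) (s : {set T}) (P : pred T) :
  (-1) ^+ #|[set a in s | P a]| = \prod_(a in s) (if P a then -1 else 1) :> R.
Proof.
rewrite -prodr_const big_mkcond [RHS]big_mkcond; apply: eq_bigr => a _.
by rewrite !inE; case: (a \in s); case: (P a).
Qed.

Section EdgeMap.
Variables (V : finType) (n : nat) (E1 E2 : 'I_n -> V * V) (h : 'I_n -> 'I_n).
Hypothesis E1h : forall k, E1 (h k) = E2 k.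

Lemma sadj_imset (s : {set 'I_n}) : sadj E1 (h @: s) =2 sadj E2 s.
Proof.
move=> u v; apply/existsP/existsP.
- by case=> _ /andP[/imsetP[e es ->]]; rewrite E1h => uv; exists e; rewrite es.
- by case=> e /andP[es uv]; exists (h e); rewrite imset_f //= E1h.
Qed.

Lemma sconn_imset (s : {set 'I_n}) : sconn E1 (h @: s) =2 sconn E2 s.
Proof. by move=> u v; apply: eq_connect; apply: sadj_imset. Qed.

Lemma valid_state_imset (S : State E2) : valid_state E1 (h @: st_s S, st_c S).
Proof.
apply/forallP=> u; apply/forallP=> v; rewrite /= sconn_imset.
by have /forallP/(_ u)/forallP := valP S.
Qed.

Definition state_imset (S : State E2) : State E1 :=
  exist (valid_state E1) _ (valid_state_imset S).

Lemma st_s_state_imset (S : State E2) : st_s (state_imset S) = h @: st_s S.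
Proof. by []. Qed.

Lemma st_c_state_imset (S : State E2) : st_c (state_imset S) = st_c S.
Proof. by []. Qed.

Lemma jdeg_state_imset (S : State E2) : jdeg (state_imset S) = jdeg S.
Proof.
have same_comp u : [set v | sconn E1 (st_s (state_imset S)) u v] =
                   [set v | sconn E2 (st_s S) u v].
  by apply/setP=> v; rewrite !inE st_s_state_imset sconn_imset.
by rewrite /jdeg st_c_state_imset (eq_imset _ same_comp).
Qed.

Lemma ideg_state_imset (S : State E2) : injective h -> ideg (state_imset S) = ideg S.
Proof. by move=> h_inj; rewrite /ideg st_s_state_imset card_imset. Qed.

Lemma newcol_imset (s : {set 'I_n}) (c : {ffun V -> bool}) (e : 'I_n) :
  newcol E1 (h @: s) c (h e) = newcol E2 s c e.
Proof.
by apply/ffunP=> v; rewrite !ffunE E1h -imset_set1 -imsetU sconn_imset.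
Qed.

Lemma Se_zero_imset (s : {set 'I_n}) (c : {ffun V -> bool}) (e : 'I_n) :
  Se_zero E1 (h @: s) c (h e) = Se_zero E2 s c e.
Proof. by rewrite /Se_zero E1h sconn_imset. Qed.

End EdgeMap.

Section InversionSign.
Variables (n : nat) (sigma : {perm 'I_n}).

Definition inversion_sign2 (a b : 'I_n) : int :=
  if (a < b)%N && (sigma b < sigma a)%N then -1 else 1.

Definition inversion_sign (s : {set 'I_n}) : int :=
  \prod_(a in s) \prod_(b in s) inversion_sign2 a b.

Lemma inversion_sign_sqr (s : {set 'I_n}) :
  inversion_sign s * inversion_sign s = 1.
Proof.
rewrite /inversion_sign -big_split big1 // => a _.
by rewrite -big_split big1 // => b _; rewrite /inversion_sign2; case: ifP.
Qed.

Lemma inversion_signU1 (s : {set 'I_n}) (e : 'I_n) : e \notin s ->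
  inversion_sign (e |: s) =
  inversion_sign s * \prod_(a in s) (inversion_sign2 e a * inversion_sign2 a e).
Proof.
move=> es; rewrite /inversion_sign big_setU1 //= big_setU1 //=.
rewrite (eq_bigr _ (fun a _ => big_setU1 _ es)) /=.
rewrite !big_split /= {1}/inversion_sign2 ltnn mul1r.
by rewrite mulrA mulrC.
Qed.

(* The pair {a, e} is inverted by sigma exactly when the comparisons of
   (a, e) and of (sigma a, sigma e) disagree. *)
Lemma perm_ltn_sign (a e : 'I_n) : a != e ->
  (if (sigma a < sigma e)%N then -1 else 1) =
  inversion_sign2 e a * inversion_sign2 a e * (if (a < e)%N then -1 else 1).
Proof.
move=> ae; have sae : sigma a != sigma e by rewrite (inj_eq perm_inj).
rewrite /inversion_sign2.
case: (ltngtP a e) => [||/val_inj eq_ae]; last by rewrite eq_ae eqxx in ae.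
all: case: (ltngtP (sigma a) (sigma e)) => [||/val_inj eq_sae] //.
all: by rewrite eq_sae eqxx in sae.
Qed.

Lemma inversion_sign_nbefore (s : {set 'I_n}) (e : 'I_n) : e \notin s ->
  inversion_sign s * (-1) ^+ nbefore (sigma @: s) (sigma e) =
  inversion_sign (s :|: [set e]) * (-1) ^+ nbefore s e.
Proof.
move=> es; rewrite setUC inversion_signU1 // /nbefore !sign_card.
rewrite big_imset /=; last by move=> x y _ _; apply: perm_inj.
rewrite -mulrA; congr (_ * _); rewrite -big_split; apply: eq_bigr => a as_ /=.
by apply: perm_ltn_sign; apply: contraNneq es => <-.
Qed.

End InversionSign.

Lemma cochainDE (V : finType) (n : nat) (ends : 'I_n -> V * V)
  (x y : Cochain ends) (S : State ends) : (x + y) S = x S + y S.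
Proof. exact: ffunE. Qed.

Lemma dmapE (V : finType) (n : nat) (ends : 'I_n -> V * V)
  (x : Cochain ends) (T : State ends) :
  dmap x T = \sum_(S : State ends) x S * dcoef S T.
Proof. exact: ffunE. Qed.

Section EdgeRelabelling.
Variables (V : finType) (n : nat) (ends ends' : 'I_n -> V * V).
Variable sigma : {perm 'I_n}.
Hypothesis ends'_sigma : forall k, ends' (sigma k) = ends k.
Local Notation eps := (inversion_sign sigma).

Lemma ends_sigmaV (k : 'I_n) : ends ((sigma^-1)%g k) = ends' k.
Proof. by rewrite -ends'_sigma permKV. Qed.

Definition relabel_state : State ends -> State ends' := state_imset ends'_sigma.
Definition unrelabel_state : State ends' -> State ends := state_imset ends_sigmaV.

Lemma relabel_stateK : cancel relabel_state unrelabel_state.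
Proof.
move=> S; apply: val_inj; rewrite /= -imset_comp.
under eq_imset => x do rewrite /= permK.
by rewrite imset_id st_c_state_imset; case: S => [[]].
Qed.

Lemma unrelabel_stateK : cancel unrelabel_state relabel_state.
Proof.
move=> S; apply: val_inj; rewrite /= -imset_comp.
under eq_imset => x do rewrite /= permKV.
by rewrite imset_id st_c_state_imset; case: S => [[]].
Qed.

Lemma dcoef_relabel (S T : State ends) :
  eps (st_s S) * dcoef (relabel_state S) (relabel_state T) =
  eps (st_s T) * dcoef S T.
Proof.
have sigma_inj := @perm_inj _ sigma.
have sigma_setU1 (s : {set 'I_n}) e :
    sigma @: s :|: [set sigma e] = sigma @: (s :|: [set e]).
  by rewrite -imset_set1 imsetU.
rewrite /dcoef (reindex_inj sigma_inj) !mulr_sumr.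
symmetry; apply: eq_big => [e|e]; rewrite !st_s_state_imset ?st_c_state_imset.
  rewrite (mem_imset _ _ sigma_inj) sigma_setU1 (inj_eq (imset_inj sigma_inj)).
  by rewrite (newcol_imset ends'_sigma) (Se_zero_imset ends'_sigma).
by move=> /and4P[es /eqP -> _ _]; rewrite inversion_sign_nbefore.
Qed.

Definition relabel_cochain (x : Cochain ends) : Cochain ends' :=
  [ffun T => eps (st_s (unrelabel_state T)) * x (unrelabel_state T)].

Definition unrelabel_cochain (y : Cochain ends') : Cochain ends :=
  [ffun S => eps (st_s S) * y (relabel_state S)].

(* Rewrites in goals mentioning cochains of both graphs are confined to one
   side or subterm: letting the matcher try a pattern on states of one graph
   against a term on states of the other makes it compare the two finType
   instances of states, which is very slow. *)
Lemma relabel_cochainE (x : Cochain ends) (S : State ends) :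
  relabel_cochain x (relabel_state S) = eps (st_s S) * x S.
Proof. by rewrite [LHS]ffunE relabel_stateK. Qed.

Lemma unrelabel_cochainE (y : Cochain ends') (S : State ends) :
  unrelabel_cochain y S = eps (st_s S) * y (relabel_state S).
Proof. exact: ffunE. Qed.

Lemma relabel_cochainD (x y : Cochain ends) :
  relabel_cochain (x + y) = relabel_cochain x + relabel_cochain y.
Proof.
apply/ffunP=> T; rewrite -(unrelabel_stateK T) [RHS]cochainDE.
rewrite [LHS]relabel_cochainE [X in _ = X + _]relabel_cochainE.
rewrite [X in _ = _ + X]relabel_cochainE.
by rewrite cochainDE mulrDr.
Qed.

Lemma relabel_cochain_bij : bijective relabel_cochain.
Proof.
exists unrelabel_cochain => [x | y]; apply/ffunP.
- move=> S; rewrite [LHS]unrelabel_cochainE [in LHS]relabel_cochainE.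
  by rewrite mulrA inversion_sign_sqr mul1r.
- move=> T; rewrite -(unrelabel_stateK T).
  rewrite [LHS]relabel_cochainE [in LHS]unrelabel_cochainE.
  by rewrite mulrA inversion_sign_sqr mul1r.
Qed.

Lemma relabel_cochain_Cij (i j : nat) (x : Cochain ends) :
  inCij i j x -> inCij i j (relabel_cochain x).
Proof.
move=> xij T; rewrite -(unrelabel_stateK T); move: (unrelabel_state T) => S.
rewrite relabel_cochainE mulf_eq0 negb_or => /andP[_ /xij].
by rewrite jdeg_state_imset (ideg_state_imset _ _ (@perm_inj _ sigma)).
Qed.

Lemma relabel_cochain_dmap (x : Cochain ends) :
  relabel_cochain (dmap x) = dmap (relabel_cochain x).
Proof.
have relabel_bij : bijective relabel_state.
  by exists unrelabel_state; [apply: relabel_stateK | apply: unrelabel_stateK].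
apply/ffunP=> T; rewrite -(unrelabel_stateK T); move: (unrelabel_state T) => T0.
rewrite [LHS]relabel_cochainE [in LHS]dmapE [RHS]dmapE mulr_sumr.
rewrite [RHS](reindex relabel_state) /=; last exact: onW_bij.
apply: eq_bigr => S _; rewrite [in RHS]relabel_cochainE -mulrA.
by rewrite [RHS]mulrCA dcoef_relabel mulrCA.
Qed.

End EdgeRelabelling.

Lemma relabel_perm (V : finType) (n : nat) (ends : 'I_n -> V * V)
  (sigma : {perm 'I_n}) (k : 'I_n) : relabel ends sigma (sigma k) = ends k.
Proof. by rewrite /relabel permK. Qed.

Theorem mainTheorem3 (V : finType) (n : nat) (ends : 'I_n -> V * V)
  (sigma : {perm 'I_n}) :
  complex_iso ends (relabel ends sigma).
Proof.
have ends_sigma := relabel_perm ends sigma.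
exists (relabel_cochain ends_sigma); split.
- exact: relabel_cochainD.
- exact: relabel_cochain_bij.
- exact: relabel_cochain_Cij.
- exact: relabel_cochain_dmap.
Qed.
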